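(* Let $E$ be a graph and let $G_E$ be the set of pairs $(p,q)$ of paths with $\mathbf{r}(p)=\mathbf{r}(q)$ (corresponding to the elements $pq^*$ of $L_K(E)$). Define $(pu,qu)\preceq(p,q)$ for every $(p,q)\in G_E$ and every path $u$ with $\mathbf{s}(u)=\mathbf{r}(p)$ (''$(pu,qu)$ reduces to $(p,q)$''). Call $(p,q)$ irreducible if $(p,q)\preceq(r,s)$ implies $p=r$ and $q=s$. Call two elements comparable, written $(p_1,q_1)\sim(p_2,q_2)$, if there are $(p,q)\in G_E$ and paths $u_1,u_2$ with $(p_1,q_1)=(pu_1,qu_1)$ and $(p_2,q_2)=(pu_2,qu_2)$. Then: (1) every element of $G_E$ reduces to a unique irreducible element; (2) two elements of $G_E$ are comparable if and only if they reduce to the same irreducible element, and this irreducible element is unique; (3) $\sim$ is an equivalence relation on $G_E$, and all elements of one equivalence class reduce to the same (unique) irreducible element; (4) if $t$ is a canonical trace on $L_K(E)$ (for some field $K$) and $(p,q),(r,s)\in G_E$ satisfy $t\big(pq^*(rs^* )^*\big)\neq0$, then $(p,q)\sim(r,s)$.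
   Context: A (directed) graph $E=(E^0,E^1,\mathbf{s},\mathbf{r})$ has vertex set $E^0$, edge set $E^1$, source and range maps; no finiteness or countability is assumed. A path is a vertex $v$ (length $0$, $\mathbf{s}(v)=\mathbf{r}(v)=v$) or a sequence $p=e_1\cdots e_n$ of edges with $\mathbf{r}(e_i)=\mathbf{s}(e_{i+1})$, length $|p|=n$, $\mathbf{s}(p)=\mathbf{s}(e_1)$, $\mathbf{r}(p)=\mathbf{r}(e_n)$; $pu$ denotes concatenation (with $pv=p$ for the vertex $v=\mathbf{r}(p)$). A vertex $v$ is regular if $\mathbf{s}^{-1}(v)$ is nonempty and finite. The Leavitt path algebra $L_K(E)$ over a field $K$ with involution is the free $K$-algebra generated by $E^0\cup E^1\cup\{e^*:e\in E^1\}$ subject to (V) $vw=\delta_{v,w}v$; (E1) $\mathbf{s}(e)e=e\mathbf{r}(e)=e$; (E2) $\mathbf{r}(e)e^*=e^*\mathbf{s}(e)=e^*$; (CK1) $e^*f=\delta_{e,f}\mathbf{r}(e)$; (CK2) $v=\sum_{e\in\mathbf{s}^{-1}(v)}ee^*$ for regular $v$; for a path $p=e_1\cdots e_n$, $p^*=e_n^*\cdots e_1^*$, $v^*=v$, and the involution is $(\sum a_ip_iq_i^* )^*=\sum a_i^*q_ip_i^*$. A trace is an additive map $t$ with $t(xy)=t(yx)$; a trace $t$ on $L_K(E)$ is canonical if $t(pq^* )=\delta_{p,q}\,t(\mathbf{r}(p))$ for all paths $p,q$ with $\mathbf{r}(p)=\mathbf{r}(q)$. *)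

From HB Require Import structures.
From mathcomp Require Import all_boot all_order all_algebra.
From Stdlib Require Lists.List.
Set Implicit Arguments. Unset Strict Implicit. Unset Printing Implicit Defensive.
Import GRing.Theory.
Local Open Scope ring_scope.

Section Graph.
Variables (E0 E1 : Type) (src rng : E1 -> E0).

(* A gpath is represented as (start vertex, list of edges).  The vertex
   gpath v is (v, [::]); a gpath e1...en is (s(e1), [:: e1; ...; en]). *)
Definition gpath := (E0 * seq E1)%type.

Fixpoint chain (v : E0) (l : seq E1) : Prop :=
  match l with
  | [::] => True
  | e :: l' => src e = v /\ chain (rng e) l'
  end.

Fixpoint pend (v : E0) (l : seq E1) : E0 :=
  match l with
  | [::] => v
  | e :: l' => pend (rng e) l'
  end.

Definition is_path (p : gpath) : Prop := chain p.1 p.2.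
Definition psrc (p : gpath) : E0 := p.1.
Definition prng (p : gpath) : E0 := pend p.1 p.2.
(* concatenation p u (meaningful when psrc u = prng p); p v = p, v u = u *)
Definition pcat (p u : gpath) : gpath := (p.1, p.2 ++ u.2).

Definition inG (x : gpath * gpath) : Prop :=
  is_path x.1 /\ is_path x.2 /\ prng x.1 = prng x.2.

Definition pq_reduces (x y : gpath * gpath) : Prop :=
  inG y /\ exists u : gpath, is_path u /\ psrc u = prng y.1 /\
     x = (pcat y.1 u, pcat y.2 u).

Definition pq_irreducible (x : gpath * gpath) : Prop :=
  forall y, pq_reduces x y -> x.1 = y.1 /\ x.2 = y.2.

Definition pq_comparable (x1 x2 : gpath * gpath) : Prop :=
  exists y, inG y /\ exists u1 u2 : gpath,
    is_path u1 /\ psrc u1 = prng y.1 /\ is_path u2 /\ psrc u2 = prng y.1 /\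
    x1 = (pcat y.1 u1, pcat y.2 u1) /\ x2 = (pcat y.1 u2, pcat y.2 u2).

(* generators: vertices, edges, ghost edges e^star *)
Inductive gen := GV of E0 | GE of E1 | GS of E1.
Definition word := seq gen.

Variable K : fieldType.
(* formal K-linear combinations of words = elements of the (unitized) free
   K-algebra on the generators; the empty word is the unit. *)
Definition fa := seq (K * word).
Definition fmul (x y : fa) : fa :=
  [seq (a.1 * b.1, a.2 ++ b.2) | a <- x, b <- y].

(* generators of the ideal of relations (V),(E1),(E2),(CK1),(CK2) *)
Inductive lrel : fa -> Prop :=
  | relV_eq v : lrel [:: (1, [:: GV v; GV v]); (-1, [:: GV v])]
  | relV_neq v w : v <> w -> lrel [:: (1, [:: GV v; GV w])]
  | relE1s e : lrel [:: (1, [:: GV (src e); GE e]); (-1, [:: GE e])]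
  | relE1r e : lrel [:: (1, [:: GE e; GV (rng e)]); (-1, [:: GE e])]
  | relE2r e : lrel [:: (1, [:: GV (rng e); GS e]); (-1, [:: GS e])]
  | relE2s e : lrel [:: (1, [:: GS e; GV (src e)]); (-1, [:: GS e])]
  | relCK1_eq e : lrel [:: (1, [:: GS e; GE e]); (-1, [:: GV (rng e)])]
  | relCK1_neq e f : e <> f -> lrel [:: (1, [:: GS e; GE f])]
  | relCK2 v (l : seq E1) :
      l <> [::] -> List.NoDup l -> (forall e, src e = v <-> List.In e l) ->
      lrel ((1, [:: GV v]) :: [seq (-1, [:: GE e; GS e]) | e <- l]).

Definition pword (p : gpath) : word :=
  if p.2 is [::] then [:: GV p.1] else [seq GE e | e <- p.2].
Definition sword (q : gpath) : word :=
  if q.2 is [::] then [:: GV q.1] else rev [seq GS e | e <- q.2].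
Definition mono (p q : gpath) : fa := [:: (1, pword p ++ sword q)].

(* A trace on L_K(E) with values in an abelian group V: an additive map on
   the free algebra (well defined on formal combinations), vanishing on the
   ideal generated by the relations, with t(xy) = t(yx). *)
Definition is_trace (V : zmodType) (t : fa -> V) : Prop :=
  [/\ t [::] = 0,
      (forall x y, t (x ++ y) = t x + t y),
      (forall a b w, t [:: (a + b, w)] = t [:: (a, w)] + t [:: (b, w)]),
      (forall x r y, lrel r -> t (fmul x (fmul r y)) = 0) &
      (forall x y, t (fmul x y) = t (fmul y x))].

Definition is_canonical (V : zmodType) (t : fa -> V) : Prop :=
  forall p q : gpath, is_path p -> is_path q -> prng p = prng q ->
    (p = q -> t (mono p q) = t [:: (1, [:: GV (prng p)])]) /\
    (p <> q -> t (mono p q) = 0).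

End Graph.

From HB Require Import structures.
From mathcomp Require Import all_boot all_order all_algebra.
From Stdlib Require Import Classical.
Import GRing.Theory.
Local Open Scope ring_scope.
Set Implicit Arguments. Unset Strict Implicit.

(* A reduction (pu, qu) -> (p, q) strictly shortens p unless u is trivial, so
   every element reduces to an irreducible one by induction on |p|.  Two
   reductions of the same element only differ by where the common suffix u is
   cut, hence one of the two reducts reduces to the other; this gives the
   uniqueness of irreducible reducts, and comparability then means having the
   same irreducible reduct.
   For (4), the relations (V), (E1), (E2), (CK1) yield the multiplication rule
   p q^* s r^* = p l r^* if s = q l, p (r l)^* if q = s l, and 0 otherwise.
   A canonical trace vanishes on p' r'^* unless p' = r', so a nonzero trace
   forces r = p l, s = q l, or p = r l, q = s l. *)

Lemma cat_eq_cat_suffix (T : Type) (l1 a l2 b : seq T) :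
  l1 ++ a = l2 ++ b -> (size a <= size b)%N -> exists2 w, l1 = l2 ++ w & b = w ++ a.
Proof.
move=> eq_cat le_ab; have le_l21 : (size l2 <= size l1)%N.
  have := congr1 size eq_cat; rewrite !size_cat => /eqP.
  by rewrite -(leq_add2r (size a)) => /eqP->; rewrite leq_add2l.
have l1E : l1 = l2 ++ drop (size l2) l1.
  have := congr1 (take (size l2)) eq_cat; rewrite takel_cat // take_size_cat // => tE.
  by rewrite -{1}(cat_take_drop (size l2) l1) tE.
exists (drop (size l2) l1) => //.
by move: eq_cat; rewrite {1}l1E -catA => /(congr1 (drop (size l2))); rewrite !drop_size_cat.
Qed.

Lemma cat_cancel_r (T : Type) (s1 s2 s : seq T) : s1 ++ s = s2 ++ s -> s1 = s2.
Proof.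
move=> /(congr1 rev); rewrite !rev_cat => /(congr1 (drop (size (rev s)))).
by rewrite !drop_size_cat // => /(congr1 rev); rewrite !revK.
Qed.

Section Reduction.
Variables (E0 E1 : Type) (src rng : E1 -> E0).

Local Notation reduces := (pq_reduces src rng).
Local Notation irreducible := (pq_irreducible src rng).
Local Notation comparable := (pq_comparable src rng).

Lemma chain_cat v (l1 l2 : seq E1) :
  chain src rng v (l1 ++ l2) <-> chain src rng v l1 /\ chain src rng (pend rng v l1) l2.
Proof. by elim: l1 v => [|e l IH] v /=; [tauto | rewrite IH; tauto]. Qed.

Lemma pend_cat v (l1 l2 : seq E1) : pend rng v (l1 ++ l2) = pend rng (pend rng v l1) l2.
Proof. by elim: l1 v => [|e l IH] v //=. Qed.

Lemma pend_rcons v (l : seq E1) e : pend rng v (rcons l e) = rng e.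
Proof. by elim: l v => [|f l IH] v //=. Qed.

Lemma is_path_pcat (p u : gpath E0 E1) : psrc u = prng rng p ->
  is_path src rng (pcat p u) <-> is_path src rng p /\ is_path src rng u.
Proof. by case: p u => [a l] [b m]; rewrite /psrc /prng /is_path /pcat /= => ->; apply: chain_cat. Qed.

Lemma prng_pcat (p u : gpath E0 E1) : psrc u = prng rng p -> prng rng (pcat p u) = prng rng u.
Proof. by case: p u => [a l] [b m]; rewrite /psrc /prng /pcat /= pend_cat => ->. Qed.

Lemma pq_reduces_refl x : inG src rng x -> reduces x x.
Proof.
move=> Gx; split=> //; exists (prng rng x.1, [::]); do 2!split=> //.
by case: x {Gx} => [[a b] [c d]]; rewrite /pcat /= !cats0.
Qed.

Lemma pq_reduces_trans x y z : reduces x y -> reduces y z -> reduces x z.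
Proof.
move=> [_ [u [Pu [Su ->]]]] [Gz [w [Pw [Sw yE]]]]; subst y; split=> //.
exists (pcat w u); split; last by split=> //; rewrite /pcat /= !catA.
move: Pu Pw Su Sw; rewrite /is_path /psrc /prng /= pend_cat => Pu Pw uE wE.
by apply/chain_cat; split=> //; rewrite wE -uE.
Qed.

Lemma pq_reduces_comparable x y : reduces x y -> comparable x y.
Proof.
move=> [Gy [u [Pu [Su ->]]]]; have [_ [v [Pv [Sv yE]]]] := pq_reduces_refl Gy.
by exists y; split=> //; exists u, v; rewrite -yE.
Qed.

Lemma pq_comparable_sym x y : comparable x y -> comparable y x.
Proof. by move=> [z [Gz [u1 [u2 [? [? [? [? [-> ->]]]]]]]]]; exists z; split=> //; exists u2, u1. Qed.

Lemma pq_reduces_size_lt x y :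
  reduces x y -> ~ (x.1 = y.1 /\ x.2 = y.2) -> (size y.1.2 < size x.1.2)%N.
Proof.
move=> [_ [[a [|e l]] [_ [_ ->]]]]; rewrite /pcat /= ?cats0 -?surjective_pairing.
  by case.
by rewrite size_cat addnS ltnS leq_addr.
Qed.

Lemma exists_pq_irreducible x : inG src rng x -> exists2 y, irreducible y & reduces x y.
Proof.
have [n] := ubnP (size x.1.2); elim: n x => // n IH x /ltnSE le_xn Gx.
case: (classic (irreducible x)) => [irr_x|]; first by exists x => //; exact: pq_reduces_refl.
move=> /not_all_ex_not[y] /(imply_to_and (reduces x y))[xy neq_xy].
have [z irr_z yz] := IH y (leq_trans (pq_reduces_size_lt xy neq_xy) le_xn) xy.1.
by exists z => //; exact: pq_reduces_trans yz.
Qed.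

Lemma pq_reduces_of_shorter y1 y2 u1 u2 :
  inG src rng y2 -> is_path src rng u2 -> psrc u2 = prng rng y2.1 ->
  (pcat y1.1 u1, pcat y1.2 u1) = (pcat y2.1 u2, pcat y2.2 u2) ->
  (size u1.2 <= size u2.2)%N -> reduces y1 y2.
Proof.
rewrite /pcat => Gy2 Pu2 Su2 [eq_src1 eq_p eq_src2 eq_q] le_u.
have [w py1 u2E] := cat_eq_cat_suffix eq_p le_u.
have qy1 : y1.2.2 = y2.2.2 ++ w by apply: (@cat_cancel_r _ _ _ u1.2); rewrite -catA -u2E.
split=> //; exists (prng rng y2.1, w); do 2?split=> //.
  by move: Pu2 Su2; rewrite /is_path u2E chain_cat /psrc => -[+ _] <-.
by case: y1 eq_src1 eq_src2 py1 qy1 {eq_p eq_q} => [[a b] [c d]] /= -> -> -> ->.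
Qed.

Lemma pq_reduces_total x y1 y2 : reduces x y1 -> reduces x y2 -> reduces y1 y2 \/ reduces y2 y1.
Proof.
move=> [G1 [u1 [P1 [S1 xE1]]]] [G2 [u2 [P2 [S2 xE2]]]].
have [le_u | /ltnW le_u] := leqP (size u1.2) (size u2.2).
  by left; apply: pq_reduces_of_shorter le_u; rewrite -?xE1 -?xE2.
by right; apply: pq_reduces_of_shorter le_u; rewrite -?xE1 -?xE2.
Qed.

Lemma pq_irreducible_unique x y1 y2 :
  reduces x y1 -> reduces x y2 -> irreducible y1 -> irreducible y2 -> y1 = y2.
Proof.
move=> xy1 xy2 irr1 irr2; case: y1 y2 xy1 xy2 irr1 irr2 => [p1 q1] [p2 q2] xy1 xy2 irr1 irr2.
by case: (pq_reduces_total xy1 xy2) => [/irr1 | /irr2] /= [-> ->].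
Qed.

Lemma pq_comparable_iff x y :
  comparable x y <-> exists z, irreducible z /\ reduces x z /\ reduces y z.
Proof.
split=> [[w [Gw [u1 [u2 [P1 [S1 [P2 [S2 [xE yE]]]]]]]]]|[z [_ [[Gz [u1 [P1 [S1 ->]]]] [_ [u2 [P2 [S2 ->]]]]]]]].
  have [z irr_z wz] := exists_pq_irreducible Gw.
  by exists z; do 2?split=> //; apply: pq_reduces_trans wz; split=> //; [exists u1 | exists u2].
by exists z; split=> //; exists u1, u2.
Qed.

Lemma pq_comparable_trans x y z : comparable x y -> comparable y z -> comparable x z.
Proof.
move=> /pq_comparable_iff[z1 [irr1 [xz1 yz1]]] /pq_comparable_iff[z2 [irr2 [yz2 zz2]]].
apply/pq_comparable_iff; exists z1; do 2?split=> //.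
by rewrite (pq_irreducible_unique yz1 yz2 irr1 irr2).
Qed.

Lemma pq_comparable_reduces x y z :
  comparable x y -> irreducible z -> reduces x z -> reduces y z.
Proof.
move=> /pq_comparable_iff[w [irr_w [xw yw]]] irr_z xz.
by rewrite (pq_irreducible_unique xz xw irr_z irr_w).
Qed.

End Reduction.

(* The words of p and of q^* with the source vertex always written: on paths
   they agree with pword p and sword q modulo (E1), (E2), without the special
   case for paths of length 0. *)
Section Words.
Variables (E0 E1 : Type).

Definition rword (p : gpath E0 E1) : word E0 E1 := GV E1 p.1 :: map (@GE E0 E1) p.2.
Definition gword (q : gpath E0 E1) : word E0 E1 :=
  rev (map (@GS E0 E1) q.2) ++ [:: GV E1 q.1].

Definition mword (p q : gpath E0 E1) : word E0 E1 := rword p ++ gword q.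

End Words.

Section Trace.
Variables (E0 E1 : Type) (src rng : E1 -> E0) (K : fieldType) (V : zmodType)
  (t : fa E0 E1 K -> V).
Hypothesis t_trace : is_trace src rng t.

Local Notation gv := (GV E1).
Local Notation ge := (@GE E0 E1).
Local Notation gs := (@GS E0 E1).

(* Only additivity and the vanishing on the ideal of relations are used below,
   never t(xy) = t(yx). *)
Definition tw (w : word E0 E1) : V := t [:: (1, w)].
Definition tw_equiv (w1 w2 : word E0 E1) : Prop :=
  forall A B, tw (A ++ w1 ++ B) = tw (A ++ w2 ++ B).
Definition tw_null (w : word E0 E1) : Prop := forall A B, tw (A ++ w ++ B) = 0.

Lemma tw_opp w : t [:: (-1, w)] = - tw w.
Proof.
have [_ _ t_add _ _] := t_trace.
have t0 : t [:: (0, w)] = 0.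
  by apply: (@addrI _ (t [:: (0, w)])); rewrite -t_add !addr0.
by apply/eqP; rewrite -addr_eq0 addrC /tw -t_add subrr t0.
Qed.

Lemma lrel_equiv w1 w2 : lrel src rng (K:=K) [:: (1, w1); (-1, w2)] -> tw_equiv w1 w2.
Proof.
have [_ t_cat _ t_rel _] := t_trace; move=> /t_rel rel A B.
move: (rel [:: (1, A)] [:: (1, B)]); rewrite /fmul /= -cat1s t_cat !mulr1 !mul1r tw_opp.
by move=> /eqP; rewrite subr_eq0 /tw !catA => /eqP.
Qed.

Lemma lrel_null w : lrel src rng (K:=K) [:: (1, w)] -> tw_null w.
Proof.
have [_ _ _ t_rel _] := t_trace; move=> /t_rel rel A B.
by move: (rel [:: (1, A)] [:: (1, B)]); rewrite /fmul /= !mulr1 /tw catA.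
Qed.

Lemma tw_equiv_sym w1 w2 : tw_equiv w1 w2 -> tw_equiv w2 w1.
Proof. by move=> eq12 A B; rewrite eq12. Qed.

Lemma tw_equiv_trans w1 w2 w3 : tw_equiv w1 w2 -> tw_equiv w2 w3 -> tw_equiv w1 w3.
Proof. by move=> eq12 eq23 A B; rewrite eq12 eq23. Qed.

Lemma tw_equiv_ctx a b w1 w2 : tw_equiv w1 w2 -> tw_equiv (a ++ w1 ++ b) (a ++ w2 ++ b).
Proof. by move=> eq12 A B; have := eq12 (A ++ a) (b ++ B); rewrite -!catA. Qed.

Lemma tw_equiv_cat a1 a2 b1 b2 :
  tw_equiv a1 a2 -> tw_equiv b1 b2 -> tw_equiv (a1 ++ b1) (a2 ++ b2).
Proof.
move=> eq_a eq_b; apply: (@tw_equiv_trans _ (a2 ++ b1)).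
  by have := tw_equiv_ctx [::] b1 eq_a.
by have := tw_equiv_ctx a2 [::] eq_b; rewrite !cats0.
Qed.

Lemma tw_null_ctx a b w : tw_null w -> tw_null (a ++ w ++ b).
Proof. by move=> null_w A B; have := null_w (A ++ a) (b ++ B); rewrite -!catA. Qed.

Lemma tw_null_equiv w1 w2 : tw_equiv w1 w2 -> tw_null w2 -> tw_null w1.
Proof. by move=> eq12 null2 A B; rewrite eq12 null2. Qed.

Lemma tw_equivE w1 w2 : tw_equiv w1 w2 -> tw w1 = tw w2.
Proof. by move=> eq12; have := eq12 [::] [::]; rewrite /= !cats0. Qed.

Lemma tw_nullE w : tw_null w -> tw w = 0.
Proof. by move=> null_w; have := null_w [::] [::]; rewrite /= !cats0. Qed.

Lemma pword_equiv (p : gpath E0 E1) : is_path src rng p -> tw_equiv (pword p) (rword p).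
Proof.
case: p => v [|e l] // [/= eE _]; rewrite /pword /rword /= -eE; apply: tw_equiv_sym.
by have := tw_equiv_ctx [::] (map ge l) (lrel_equiv (relE1s src rng K e)).
Qed.

Lemma sword_equiv (q : gpath E0 E1) : is_path src rng q -> tw_equiv (sword q) (gword q).
Proof.
case: q => v [|e l] // [/= eE _]; rewrite /sword /gword /= -eE rev_cons -cats1 -catA.
apply: tw_equiv_sym.
by have := tw_equiv_ctx (rev (map gs l)) [::] (lrel_equiv (relE2s src rng K e)); rewrite cats0.
Qed.

Lemma rword_rng (p : gpath E0 E1) : tw_equiv (rword p ++ [:: gv (prng rng p)]) (rword p).
Proof.
case: p => v l; rewrite /rword /prng /=; case/lastP: l => [|l e] /=.
  by have := lrel_equiv (relV_eq src rng K v).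
rewrite pend_rcons map_rcons -cats1 -catA.
by have := tw_equiv_ctx (gv v :: map ge l) [::] (lrel_equiv (relE1r src rng K e)); rewrite !cats0.
Qed.

Lemma gword_rng (q : gpath E0 E1) : tw_equiv (gv (prng rng q) :: gword q) (gword q).
Proof.
case: q => v l; rewrite /gword /prng /=; case/lastP: l => [|l e] /=.
  by have := lrel_equiv (relV_eq src rng K v).
rewrite pend_rcons map_rcons rev_rcons.
by have := tw_equiv_ctx [::] (rev (map gs l) ++ [:: gv v]) (lrel_equiv (relE2r src rng K e)).
Qed.

Lemma rword_pcat (p u : gpath E0 E1) : psrc u = prng rng p ->
  tw_equiv (rword p ++ rword u) (rword (pcat p u)).
Proof.
case: u => x m xE; have {xE} -> : x = prng rng p := xE.
have -> : rword p ++ rword (prng rng p, m) = (rword p ++ [:: gv (prng rng p)]) ++ map ge m.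
  by rewrite -catA.
have -> : rword (pcat p (prng rng p, m)) = rword p ++ map ge m by rewrite /rword map_cat.
by have := tw_equiv_ctx [::] (map ge m) (rword_rng p).
Qed.

Lemma gword_pcat (r u : gpath E0 E1) : psrc u = prng rng r ->
  tw_equiv (gword u ++ gword r) (gword (pcat r u)).
Proof.
case: u => x m xE; have {xE} -> : x = prng rng r := xE.
have -> : gword (prng rng r, m) ++ gword r = rev (map gs m) ++ gv (prng rng r) :: gword r.
  by rewrite /gword -catA.
have -> : gword (pcat r (prng rng r, m)) = rev (map gs m) ++ gword r.
  by rewrite /gword map_cat rev_cat catA.
by have := tw_equiv_ctx (rev (map gs m)) [::] (gword_rng r); rewrite !cats0.
Qed.

Lemma ck1_cancel v (l1 l2 : seq E1) : chain src rng v l1 -> chain src rng v l2 ->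
  let w := rev (map gs l1) ++ gv v :: map ge l2 in
  [\/ tw_null w,
      exists2 l, l2 = l1 ++ l & tw_equiv w (rword (pend rng v l1, l))
    | exists2 l, l1 = l2 ++ l & tw_equiv w (gword (pend rng v l2, l))].
Proof.
elim: l1 v l2 => [|e l1 IH] v l2 path1 path2.
  by constructor 2; exists l2.
case: l2 path2 => [|f l2] path2; first by constructor 3; exists (e :: l1).
case: path1 path2 => [<- {}path1] [fE {}path2].
have peel : tw_equiv (rev (map gs (e :: l1)) ++ gv (src e) :: map ge (f :: l2))
                     (rev (map gs l1) ++ [:: gs e; ge f] ++ map ge l2).
  rewrite /= rev_cons -cats1 -catA /=.
  by have := tw_equiv_ctx (rev (map gs l1)) (ge f :: map ge l2) (lrel_equiv (relE2s src rng K e)).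
have [fe | neq_ef] := classic (f = e); last first.
  by constructor 1; apply: tw_null_equiv peel _; apply/tw_null_ctx/lrel_null/relCK1_neq => /esym.
subst f; have step : tw_equiv (rev (map gs (e :: l1)) ++ gv (src e) :: map ge (e :: l2))
                              (rev (map gs l1) ++ gv (rng e) :: map ge l2).
  exact: tw_equiv_trans peel (tw_equiv_ctx _ _ (lrel_equiv (relCK1_eq src rng K e))).
have [null_w | [l l2E eqw] | [l l1E eqw]] := IH (rng e) l2 path1 path2.
- by constructor 1; exact: tw_null_equiv step null_w.
- by constructor 2; exists l; [rewrite l2E | exact: tw_equiv_trans step eqw].
- by constructor 3; exists l; [rewrite l1E | exact: tw_equiv_trans step eqw].
Qed.

Lemma gword_rword_mul (q s : gpath E0 E1) : is_path src rng q -> is_path src rng s ->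
  [\/ tw_null (gword q ++ rword s),
      exists2 l, s = pcat q (prng rng q, l) & tw_equiv (gword q ++ rword s) (rword (prng rng q, l))
    | exists2 l, q = pcat s (prng rng s, l) & tw_equiv (gword q ++ rword s) (gword (prng rng s, l))].
Proof.
case: q s => [q1 ql] [s1 sl]; rewrite /is_path /prng /pcat /gword /rword /= -catA => path_q path_s.
have [qs | neq_qs] := classic (q1 = s1); last first.
  constructor 1.
  by have := tw_null_ctx (rev (map gs ql)) (map ge sl) (lrel_null (relV_neq src rng K neq_qs)).
subst s1; have shrink : tw_equiv (rev (map gs ql) ++ [:: gv q1] ++ gv q1 :: map ge sl)
                       (rev (map gs ql) ++ gv q1 :: map ge sl).
  exact: tw_equiv_ctx _ _ (lrel_equiv (relV_eq src rng K q1)).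
have [null_w | [l slE eqw] | [l qlE eqw]] := ck1_cancel path_q path_s.
- by constructor 1; exact: tw_null_equiv shrink null_w.
- by constructor 2; exists l; [rewrite slE | exact: tw_equiv_trans shrink eqw].
- by constructor 3; exists l; [rewrite qlE | exact: tw_equiv_trans shrink eqw].
Qed.

Lemma monomial_mul p q r s : inG src rng (p, q) -> inG src rng (r, s) ->
  let w := mword p q ++ mword s r in
  [\/ tw_null w,
      exists2 l, s = pcat q (prng rng p, l) & tw_equiv w (mword (pcat p (prng rng p, l)) r)
    | exists2 l, q = pcat s (prng rng r, l) & tw_equiv w (mword p (pcat r (prng rng r, l)))].
Proof.
move=> [_ [path_q pq]] [_ [path_s rs]] w; rewrite {}/w.
have {}pq : prng rng p = prng rng q := pq; have sr : prng rng s = prng rng r := esym rs.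
have -> : mword p q ++ mword s r = rword p ++ (gword q ++ rword s) ++ gword r.
  by rewrite /mword -!catA.
have [null_w | [l sE eqw] | [l qE eqw]] := gword_rword_mul path_q path_s.
- by constructor 1; have := tw_null_ctx (rword p) (gword r) null_w.
- constructor 2; exists l; first by rewrite pq.
  apply: (tw_equiv_trans (tw_equiv_ctx (rword p) (gword r) eqw)); rewrite -pq catA.
  by have := tw_equiv_ctx [::] (gword r) (@rword_pcat p (prng rng p, l) erefl).
- constructor 3; exists l; first by rewrite -sr.
  apply: (tw_equiv_trans (tw_equiv_ctx (rword p) (gword r) eqw)); rewrite sr.
  by have := tw_equiv_ctx (rword p) [::] (@gword_pcat r (prng rng r, l) erefl); rewrite !cats0.
Qed.

Lemma canonical_mword_eq a b : is_canonical src rng t ->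
  is_path src rng a -> is_path src rng b -> prng rng a = prng rng b -> tw (mword a b) != 0 -> a = b.
Proof.
move=> t_can path_a path_b ab; have [_ t_neq] := t_can a b path_a path_b ab.
have mono_mword : t (mono K a b) = tw (mword a b).
  exact: tw_equivE (tw_equiv_cat (pword_equiv path_a) (sword_equiv path_b)).
by have [//|/t_neq] := classic (a = b); rewrite mono_mword => ->; rewrite eqxx.
Qed.

Lemma trace_neq0_pq_comparable p q r s : is_canonical src rng t ->
  inG src rng (p, q) -> inG src rng (r, s) ->
  t (fmul (mono K p q) (mono K s r)) != 0 -> pq_comparable src rng (p, q) (r, s).
Proof.
move=> t_can Gpq Grs; have [path_p [path_q pq]] := Gpq; have [path_r [path_s rs]] := Grs.
rewrite /= in pq rs.
have -> : t (fmul (mono K p q) (mono K s r)) = tw (mword p q ++ mword s r).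
  rewrite /fmul /= mulr1; apply: tw_equivE.
  exact: tw_equiv_cat (tw_equiv_cat (pword_equiv path_p) (sword_equiv path_q))
                      (tw_equiv_cat (pword_equiv path_s) (sword_equiv path_r)).
have [null_w | [l sE eqw] | [l qE eqw]] := monomial_mul Gpq Grs.
- by rewrite tw_nullE // eqxx.
- have [_ path_l] : is_path src rng q /\ is_path src rng (prng rng p, l).
    by apply/(is_path_pcat src (u := (prng rng p, l)) pq); rewrite -sE.
  rewrite (tw_equivE eqw) => /(canonical_mword_eq t_can) rE.
  have {}rE : pcat p (prng rng p, l) = r.
    apply: rE => //; first exact/(is_path_pcat src (p := p) (u := (prng rng p, l)) erefl).
    by rewrite rs sE !prng_pcat.
  apply/pq_comparable_sym/pq_reduces_comparable; split=> //.
  by exists (prng rng p, l); rewrite -rE -sE.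
- have [_ path_l] : is_path src rng s /\ is_path src rng (prng rng r, l).
    by apply/(is_path_pcat src (u := (prng rng r, l)) rs); rewrite -qE.
  rewrite (tw_equivE eqw) => /(canonical_mword_eq t_can) pE.
  have {}pE : p = pcat r (prng rng r, l).
    apply: pE => //; first exact/(is_path_pcat src (p := r) (u := (prng rng r, l)) erefl).
    by rewrite pq qE !prng_pcat.
  apply/pq_reduces_comparable; split=> //.
  by exists (prng rng r, l); rewrite -pE -qE.
Qed.

End Trace.

Theorem lemma3p2 (E0 E1 : Type) (src rng : E1 -> E0) :
  (* (1) *)
  (forall x, inG src rng x ->
     exists! y, pq_irreducible src rng y /\ pq_reduces src rng x y) /\
  (* (2) *)
  (forall x y, inG src rng x -> inG src rng y ->
     (pq_comparable src rng x y <->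
        exists z, pq_irreducible src rng z /\ pq_reduces src rng x z /\ pq_reduces src rng y z) /\
     (pq_comparable src rng x y ->
        exists! z, pq_irreducible src rng z /\ pq_reduces src rng x z /\ pq_reduces src rng y z)) /\
  (* (3) *)
  ((forall x, inG src rng x -> pq_comparable src rng x x) /\
   (forall x y, inG src rng x -> inG src rng y ->
      pq_comparable src rng x y -> pq_comparable src rng y x) /\
   (forall x y z, inG src rng x -> inG src rng y -> inG src rng z ->
      pq_comparable src rng x y -> pq_comparable src rng y z -> pq_comparable src rng x z) /\
   (forall x y z, inG src rng x -> inG src rng y -> pq_comparable src rng x y ->
      pq_irreducible src rng z -> pq_reduces src rng x z -> pq_reduces src rng y z)) /\
  (* (4) *)
  (forall (K : fieldType) (V : zmodType) (t : fa E0 E1 K -> V),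
     is_trace src rng t -> is_canonical src rng t ->
     forall p q r s : gpath E0 E1,
       inG src rng (p, q) -> inG src rng (r, s) ->
       t (fmul (mono K p q) (mono K s r)) != 0 ->
       pq_comparable src rng (p, q) (r, s)).
Proof.
have irr_unique := @pq_irreducible_unique E0 E1 src rng.
split.
  move=> x Gx; have [y irr_y xy] := exists_pq_irreducible Gx.
  by exists y; split=> // z [irr_z xz]; exact: irr_unique xy xz irr_y irr_z.
split.
  move=> x y _ _; split=> [|/pq_comparable_iff[z [irr_z [xz yz]]]]; first exact: pq_comparable_iff.
  by exists z; split=> // z' [irr_z' [xz' _]]; exact: irr_unique xz xz' irr_z irr_z'.
split.
  split; first by move=> x /pq_reduces_refl/pq_reduces_comparable.
  split; first by move=> x y _ _ /pq_comparable_sym.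
  split; first by move=> x y z _ _ _; exact: pq_comparable_trans.
  by move=> x y z _ _; exact: pq_comparable_reduces.
by move=> K V t t_trace t_can p q r s; exact: trace_neq0_pq_comparable.
Qed.
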